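(* The binary predicate $\mathrm{Sl}$ on $\mathsf{W}^N_3$ is first-order definable in the structure $(\mathsf{W}^N_3,\prec,\Diamond_1,\Diamond_3)$.
   Context: Words are finite strings over $\mathbb{N}$; $\mathsf{W}_\omega$ is the set of all words, $\Lambda$ the empty word, $AB$ concatenation. For $k\in\mathbb{N}$, $\mathsf{S}_k$ is the set of words all of whose symbols are $\ge k$; $\mathsf{W}_3$ is the set of words all of whose symbols are $\le3$. Given a linear preorder $\precsim$ with $A\sim B$ iff $A\precsim B\wedge B\precsim A$ and $A\prec B$ iff $A\precsim B\wedge\neg B\precsim A$, a finite sequence $(A_1,\dots,A_p)$ is lexicographically not greater than $(B_1,\dots,B_q)$ iff either $p\le q$ and $A_i\sim B_i$ for all $i\le p$, or there is $s<\min(p,q)$ with $A_i\sim B_i$ for $i\le s$ and $A_{s+1}\prec B_{s+1}$. A lexicographically maximal subsequence of a finite sequence is a subsequence that is lexicographically not less than every subsequence. The linear preorder $\precsim$ on $\mathsf{W}_\omega$ is defined by recursion on (largest symbol of $AB$) $-$ (smallest symbol of $AB$): $\Lambda\precsim\Lambda$; if $AB$ is nonempty with minimal symbol $n$, write uniquely $A=A_1n\cdots nA_k$, $B=B_1n\cdots nB_l$ ($k,l\ge1$) with $A_i,B_j\in\mathsf{S}_{n+1}$ (possibly empty); let $C,D$ be lexicographically maximal subsequences of $(A_1,\dots,A_k)$, $(B_1,\dots,B_l)$; then $A\precsim B$ iff $C$ is lexicographically not greater than $D$. The set $\mathsf{NF}$: $\Lambda\in\mathsf{NF}$; a word with minimal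 symbol $n$, written $A_1n\cdots nA_k$ with $k\ge2$, $A_i\in\mathsf{S}_{n+1}$, is in $\mathsf{NF}$ iff $A_k\precsim\dots\precsim A_1$ and all $A_i\in\mathsf{NF}$. Every word is equivalent to exactly one word of $\mathsf{NF}$. For $A\in\mathsf{NF}$, $\Diamond_nA$ is the unique word of $\mathsf{NF}$ equivalent to $An$. $\mathsf{W}^N_3=\mathsf{W}_3\cap\mathsf{NF}$. For $A,B\in\mathsf{W}^N_3$, $\mathrm{Sl}(A,B)$ (''$B$ is a slice of $A$'') holds iff $A\neq\Lambda$, $B\neq\Lambda$, and there are $n\ge m\ge1$ and $C_1,\dots,C_n\in\mathsf{S}_1$ with $A=C_10C_20\cdots0C_n$ and $B=C_10C_20\cdots0C_m$. *)

From Stdlib Require Import ClassicalEpsilon.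
From mathcomp Require Import all_boot.

Set Implicit Arguments.
Unset Strict Implicit.
Unset Printing Implicit Defensive.

Definition word := seq nat.

Definition Sk (k : nat) (A : word) : bool := all (fun x => k <= x) A.
Definition W3 (A : word) : bool := all (fun x => x <= 3) A.

(** smallest / largest symbol (only used on nonempty words) *)
Definition minsym (s : word) : nat := foldr minn (head 0 s) s.
Definition maxsym (s : word) : nat := foldr maxn 0 s.

(** [splitw n A] = [:: A_1; ...; A_k] where A = A_1 n A_2 n ... n A_k,
    the A_i not containing n (k >= 1, the A_i possibly empty). *)
Definition splitw (n : nat) (A : word) : seq word :=
  foldr (fun x acc => if x == n then [::] :: acc
                      else (x :: head [::] acc) :: behead acc) [:: [::]] A.

Definition joinw (n : nat) (Cs : seq word) : word :=
  match Cs with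
  | [::] => [::]
  | C :: Cs' => C ++ flatten [seq n :: X | X <- Cs']
  end.

Definition pequiv (le : word -> word -> Prop) (x y : word) : Prop := le x y /\ le y x.
Definition plt (le : word -> word -> Prop) (x y : word) : Prop := le x y /\ ~ le y x.

Definition lexle (le : word -> word -> Prop) (s t : seq word) : Prop :=
  (size s <= size t /\
     forall i, i < size s -> pequiv le (nth [::] s i) (nth [::] t i))
  \/
  (exists k, k < minn (size s) (size t) /\
     (forall i, i < k -> pequiv le (nth [::] s i) (nth [::] t i)) /\
     plt le (nth [::] s k) (nth [::] t k)).

Definition lexmax (le : word -> word -> Prop) (s c : seq word) : Prop :=
  subseq c s /\ forall c', subseq c' s -> lexle le c' c.

Fixpoint wle_rec (f : nat) (A B : word) : Prop :=
  match f with
  | 0 => True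
  | f'.+1 =>
      if A ++ B == [::] then True
      else
        let n := minsym (A ++ B) in
        exists C D : seq word,
          lexmax (wle_rec f') (splitw n A) C /\
          lexmax (wle_rec f') (splitw n B) D /\
          lexle (wle_rec f') C D
  end.

Definition wle (A B : word) : Prop :=
  wle_rec (maxsym (A ++ B) - minsym (A ++ B)).+1 A B.
Definition wlt (A B : word) : Prop := wle A B /\ ~ wle B A.
Definition weq (A B : word) : Prop := wle A B /\ wle B A.

Inductive NF : word -> Prop :=
  | NF_nil : NF [::]
  | NF_cons (A : word) :
      A <> [::] ->
      2 <= size (splitw (minsym A) A) ->
      (forall i, i.+1 < size (splitw (minsym A) A) ->
         wle (nth [::] (splitw (minsym A) A) i.+1)
             (nth [::] (splitw (minsym A) A) i)) ->
      (forall P, P \in splitw (minsym A) A -> NF P) ->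
      NF A.

Definition W3N : Type := {A : word | W3 A /\ NF A}.

Definition W3N_nil : W3N := exist _ [::] (conj (erefl true) NF_nil).

(** Diamond_n A : the (unique) normal-form word of W^N_3 equivalent to A n *)
Definition diamond (n : nat) (a : W3N) : W3N :=
  epsilon (inhabits W3N_nil) (fun b : W3N => weq (proj1_sig b) (rcons (proj1_sig a) n)).

Definition W3N_lt (a b : W3N) : Prop := wlt (proj1_sig a) (proj1_sig b).

Definition Sl (a b : W3N) : Prop :=
  let A := proj1_sig a in let B := proj1_sig b in
  A <> [::] /\ B <> [::] /\
  exists (Cs : seq word) (m : nat),
    1 <= m /\ m <= size Cs /\ all (Sk 1) Cs /\
    A = joinw 0 Cs /\ B = joinw 0 (take m Cs).

Inductive term : Type :=
  | TVar (i : nat)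
  | TD1 (t : term)
  | TD3 (t : term).

Inductive form : Type :=
  | FEq (t u : term)
  | FLt (t u : term)
  | FNot (p : form)
  | FAnd (p q : form)
  | FOr (p q : form)
  | FImp (p q : form)
  | FEx (i : nat) (p : form)
  | FAll (i : nat) (p : form).

Fixpoint teval (e : nat -> W3N) (t : term) : W3N :=
  match t with
  | TVar i => e i
  | TD1 t' => diamond 1 (teval e t')
  | TD3 t' => diamond 3 (teval e t')
  end.

Definition upd (e : nat -> W3N) (i : nat) (a : W3N) : nat -> W3N :=
  fun j => if j == i then a else e j.

Fixpoint holds (e : nat -> W3N) (p : form) : Prop :=
  match p with
  | FEq t u => teval e t = teval e u
  | FLt t u => W3N_lt (teval e t) (teval e u)
  | FNot q => ~ holds e q
  | FAnd q r => holds e q /\ holds e r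
  | FOr q r => holds e q \/ holds e r
  | FImp q r => holds e q -> holds e r
  | FEx i q => exists a, holds (upd e i a) q
  | FAll i q => forall a, holds (upd e i a) q
  end.

Definition definable2 (P : W3N -> W3N -> Prop) : Prop :=
  exists phi : form, forall e : nat -> W3N, holds e phi <-> P (e 0) (e 1).

(* The preorder on words can be computed on codes: [enc] maps a word to a
   sequence of naturals so that A ≼ B iff the code of A is lexicographically below
   the code of B.  The code of a word packs the lexicographically maximal
   subsequence of the codes of its blocks, with separators forming a prefix code,
   so that packed codes compare block by block.  For a normal form the blocks are
   nonincreasing, so its code lists the codes of all its blocks, and coding is
   injective on normal forms.
   Appending 1 to a word C of S_1 ∩ W_3 yields the immediate successor of C among
   such words.  Hence for B ≠ Λ, whose last 0-block is C, the normal forms A with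
   B ≼ A ≺ B1 are exactly those whose sequence of 0-blocks extends that of B.  So
   Sl(a, b) holds iff b is not the least element Λ, b ≼ a and a ≺ ◇_1 b. *)

From Stdlib Require Import ClassicalEpsilon.
From mathcomp Require Import all_boot zify.

Set Implicit Arguments.
Unset Strict Implicit.
Unset Printing Implicit Defensive.

Lemma prefix_map_in (T U : eqType) (f : T -> U) (s t : seq T) :
  {in s ++ t &, injective f} -> prefix (map f s) (map f t) = prefix s t.
Proof.
elim: s t => [|a s IH] [|b t] hf; rewrite ?prefix0s // !map_cons !prefix_cons.
have -> : (f a == f b) = (a == b).
  by apply/eqP/eqP => [e|->//]; apply: hf e; rewrite mem_cat mem_head ?orbT.
have sub z : z \in s ++ t -> z \in (a :: s) ++ (b :: t).
  by rewrite !mem_cat !inE => /orP[] ->; rewrite ?orbT.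
by congr andb; apply: IH => x y /sub hx /sub hy; apply: hf.
Qed.

Lemma exists_map_preim (T U : eqType) (f : T -> U) (P : T -> Prop) (l : seq U) :
  {in l, forall u, exists2 x, P x & f x = u} -> exists2 xs, map f xs = l & {in xs, forall x, P x}.
Proof.
elim: l => [|u l IH] hl; first by exists [::].
have [x Px <-] := hl u (mem_head _ _).
have [|xs <- Pxs] := IH; first by move=> v vl; apply: hl; rewrite inE vl orbT.
by exists (x :: xs) => // y; rewrite inE => /orP[/eqP->|/Pxs].
Qed.

(** * Lexicographic order and maximal subsequences *)

Section Lex.
Variables (T : eqType) (le : rel T).

Fixpoint lex (s t : seq T) : bool :=
  match s, t with
  | [::], _ => true
  | _ :: _, [::] => false
  | a :: s', b :: t' => (le a b && (a != b)) || ((a == b) && lex s' t')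
  end.

Lemma lex_cons a b s t :
  lex (a :: s) (b :: t) = (le a b && (a != b)) || ((a == b) && lex s t).
Proof. by []. Qed.

Lemma lex_cons2 a s t : lex (a :: s) (a :: t) = lex s t.
Proof. by rewrite lex_cons eqxx andbF. Qed.

Lemma lex_refl : reflexive lex.
Proof. by elim=> //= a s ->; rewrite eqxx orbT. Qed.

Lemma lex_catl r s t : lex (r ++ s) (r ++ t) = lex s t.
Proof. by elim: r => // a r IH; rewrite !cat_cons lex_cons2. Qed.

Lemma prefix_lex s t : prefix s t -> lex s t.
Proof.
by elim: s t => [|a s IH] [|b t] //; rewrite prefix_cons => /andP[/eqP<- /IH]; rewrite lex_cons2.
Qed.

Lemma lex_cat_noprefix x y s t :
  (forall w, x ++ w != y) -> (forall w, y ++ w != x) -> lex (x ++ s) (y ++ t) = lex x y.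
Proof.
elim: x y => [|a x IH] [|b y] h1 h2.
- by move: (h1 [::]); rewrite eqxx.
- by move: (h1 (b :: y)); rewrite eqxx.
- by move: (h2 (a :: x)); rewrite eqxx.
rewrite !cat_cons !lex_cons; case: (eqVneq a b) => [eab|//]; subst b.
by rewrite IH // => w; [move: (h1 w)|move: (h2 w)]; rewrite /= eqseq_cons eqxx.
Qed.

Lemma lex_nil s : lex s [::] -> s = [::].
Proof. by case: s. Qed.

Lemma lex_nthP x0 s t : lex s t <->
  (size s <= size t /\ forall i, i < size s -> nth x0 s i = nth x0 t i) \/
  (exists k, [/\ k < minn (size s) (size t),
     forall i, i < k -> nth x0 s i = nth x0 t i &
     le (nth x0 s k) (nth x0 t k) && (nth x0 s k != nth x0 t k)]).
Proof.
elim: s t => [|a s IH] [|b t] /=; rewrite ?minnSS.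
- by split=> // _; left.
- by split=> // _; left.
- by split=> //; case=> [[]|[k []]].
split.
- case/orP=> [h|/andP[/eqP<- /IH[[h1 h2]|[k [h1 h2 h3]]]]].
  + by right; exists 0.
  + by left; split=> // -[|i] //= /h2.
  + by right; exists k.+1; split=> // -[|i] //= /h2.
- case=> [[h1 h2]|[[|k] [h1 h2 h3]]].
  + have <- : a = b by apply: (h2 0).
    rewrite eqxx andbF /=; apply/IH; left.
    by split=> // i hi; apply: (h2 i.+1).
  + by rewrite h3.
  + have <- : a = b by apply: (h2 0).
    rewrite eqxx andbF /=; apply/IH; right; exists k.
    by split=> // i hi; apply: (h2 i.+1).
Qed.

Hypotheses (le_refl : reflexive le) (le_anti : antisymmetric le).
Hypotheses (le_trans : transitive le) (le_total : total le).

Lemma lex_seq1 a b : lex [:: a] [:: b] = le a b.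
Proof. by rewrite lex_cons andbT; case: eqVneq => [->|] /=; rewrite ?le_refl ?andbT ?orbF. Qed.

Lemma lex_anti : antisymmetric lex.
Proof.
elim=> [|a s IH] [|b t] //= /andP[].
case/orP=> [/andP[h1 h2]|/andP[/eqP-> h]] /orP[/andP[h3 h4]|/andP[/eqP e h']].
- by move: h2; rewrite (@le_anti a b) ?h1 ?h3 ?eqxx.
- by move: h2; rewrite e eqxx.
- by rewrite eqxx in h4.
- by rewrite (IH t) ?h ?h'.
Qed.

Lemma lex_neq s t : lex s t -> ~~ lex t s = (s != t).
Proof.
move=> hst; apply/idP/idP; apply: contra; first by move/eqP->; apply: lex_refl.
by move=> hts; apply/eqP/lex_anti; rewrite hst hts.
Qed.

Lemma lex_trans : transitive lex.
Proof.
move=> t s u; elim: s t u => [|a s IH] [|b t] [|c u] //=.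
case/orP=> [/andP[h1 h2]|/andP[/eqP<- h]]; last first.
  by case/orP=> [/andP[-> ->] //|/andP[/eqP<- h']]; rewrite eqxx (IH _ _ h h') orbT.
case/orP=> [/andP[h3 _]|/andP[/eqP<- _]]; last by rewrite h1 h2.
have hac := le_trans h1 h3.
case: (eqVneq a c) => [eac|nac]; last by rewrite hac.
by subst c; move: h2; rewrite (@le_anti a b) ?h1 ?h3 ?eqxx.
Qed.

Lemma lex_total : total lex.
Proof.
elim=> [|a s IH] [|b t] //=.
case: (eqVneq a b) => [<-|nab] /=; first by rewrite !andbF /= IH.
by move: (le_total a b); case: (le a b); case: (le b a).
Qed.

Fixpoint maxsub (u : seq T) : seq T :=
  if u is x :: u' then
    if all (le^~ x) u' then x :: maxsub u' else maxsub u'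
  else [::].

Lemma maxsub_subseq u : subseq (maxsub u) u.
Proof.
elim: u => //= x u IH; case: ifP => _; first by rewrite eqxx.
exact: subseq_trans IH (subseq_cons _ _).
Qed.

Lemma maxsub_eq0 u : (maxsub u == [::]) = (u == [::]).
Proof.
elim: u => //= x u IH; case: ifP => // /allPn [z zin _].
by rewrite IH; case: u zin {IH}.
Qed.

Lemma maxsub_max u v : subseq v u -> lex v (maxsub u).
Proof.
elim: u v => [|x u IH] [|y v] // hs.
have hs' : subseq (if y == x then v else y :: v) u := hs.
rewrite [maxsub _]/=.
case hall: (all (le^~ x) u).
  case: (eqVneq y x) hs' => [->|nyx] hs'; first by rewrite lex_cons2 IH.
  have yin : y \in u by apply: (mem_subseq hs'); rewrite inE eqxx.
  by rewrite lex_cons (allP hall _ yin) nyx.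
case: (eqVneq y x) hs' => [->|nyx] hs'; last exact: IH.
case/allPn: hall => z zin hz.
have hxz : le x z by have := le_total z x; rewrite (negbTE hz).
apply: (@lex_trans [:: z]); last by apply: IH; rewrite sub1seq.
by rewrite lex_cons hxz; case: eqP hz => // <-; rewrite le_refl.
Qed.

Local Notation ge := (fun x y => le y x).

Lemma maxsub_sorted u : sorted ge (maxsub u).
Proof.
elim: u => //= x u IH; case: ifP => // hall.
rewrite /= (path_sortedE (rev_trans le_trans)) IH andbT.
by apply/allP=> y /(mem_subseq (maxsub_subseq u)); apply: (allP hall).
Qed.

Lemma maxsub_id u : sorted ge u -> maxsub u = u.
Proof.
elim: u => //= x u IH; rewrite (path_sortedE (rev_trans le_trans)).
by case/andP=> hall hs; rewrite hall IH.
Qed.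

Lemma maxsub_rcons u z : {in u, forall a, le z a} -> maxsub (rcons u z) = rcons (maxsub u) z.
Proof.
elim: u => //= x u IH h; rewrite all_rcons h ?mem_head //= IH; first by case: ifP.
by move=> a au; apply: h; rewrite inE au orbT.
Qed.

End Lex.

Section LexSuccessor.
Variables (T : eqType) (le : rel T).
Hypotheses (le_refl : reflexive le) (le_anti : antisymmetric le).
Hypotheses (le_trans : transitive le) (le_total : total le).
Local Notation ge := (fun x y => le y x).
Local Notation lexT := (lex le).

Lemma le_eq a b : le a b -> le b a -> a = b.
Proof. by move=> h1 h2; apply: le_anti; rewrite h1 h2. Qed.

Lemma lex_between z R S : {in S, forall a, le z a} -> lexT R S -> lexT S (rcons R z) ->
  S != rcons R z -> S = R.
Proof.
elim: R S => [|r R IH] [|s S] hz //.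
- rewrite [rcons _ _]/= lex_cons => _ /orP[/andP[h1 h2]|/andP[/eqP-> /lex_nil->]].
  + by rewrite (le_eq h1 (hz s (mem_head _ _))) eqxx in h2.
  + by rewrite eqxx.
rewrite rcons_cons !lex_cons => /orP[/andP[h1 h2]|/andP[/eqP<- h]].
  case/orP => [/andP[h3 _]|/andP[/eqP e _]]; last by rewrite e eqxx in h2.
  by rewrite (le_eq h1 h3) eqxx in h2.
rewrite eqxx andbF /= eqseq_cons eqxx /= => h' hne; rewrite (IH S) //.
by move=> a aS; apply: hz; rewrite inE aS orbT.
Qed.

Lemma sorted_rcons_ge s y : sorted ge (rcons s y) -> {in s, forall a, le y a}.
Proof.
elim: s => // a s IH; rewrite rcons_cons /= (path_sortedE (rev_trans le_trans)).
case/andP=> h1 h2 b; rewrite inE => /orP[/eqP->|/(IH h2) //].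
by move: h1; rewrite all_rcons => /andP[].
Qed.

Lemma maxsub_rcons_top s z : {in s, forall a, le a z && (a != z)} -> maxsub le (rcons s z) = [:: z].
Proof.
elim: s => // a s IH h; rewrite rcons_cons [maxsub _ _]/= all_rcons.
have /andP[h1 h2] := h a (mem_head _ _).
have -> : le z a = false by apply: contraNF h2 => h3; rewrite (le_eq h1 h3).
by rewrite IH // => b bs; apply: h; rewrite inE bs orbT.
Qed.

Lemma lex_const_prefix y V t : {in V, forall a, a = y} -> {in t, forall a, le a y} ->
  lexT V t -> prefix V t.
Proof.
elim: V t => [|a V IH] [|b t] // hV ht.
rewrite (hV a (mem_head _ _)) lex_cons => /orP[/andP[h1 h2]|/andP[/eqP<- h]].
  by rewrite (le_eq h1 (ht b (mem_head _ _))) eqxx in h2.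
rewrite prefix_cons eqxx; apply: IH h => [c cV|c ct].
  by apply: hV; rewrite inE cV orbT.
by apply: ht; rewrite inE ct orbT.
Qed.

Lemma lex_bot_prefix z S t :
  {in S, forall a, le z a} -> {in t, forall a, a = z} -> lexT S t -> prefix S t.
Proof.
elim: S t => [|a S IH] [|b t] // hS ht.
rewrite (ht b (mem_head _ _)) lex_cons => /orP[/andP[h1 h2]|/andP[/eqP-> h]].
  by rewrite (le_eq h1 (hS a (mem_head _ _))) eqxx in h2.
rewrite prefix_cons eqxx; apply: IH h => [c cS|c ct].
  by apply: hS; rewrite inE cS orbT.
by apply: ht; rewrite inE ct orbT.
Qed.

Variables y y' : T.
Hypotheses (le_yy' : le y y') (neq_yy' : y != y').

Let no_between d u V : y != d -> (le y d -> le d y' -> d != y' -> d = y) ->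
  lexT (y :: V) (d :: u) -> lexT (d :: u) [:: y'] -> d :: u != [:: y'] -> False.
Proof.
move=> nyd hs h1 h2 h3; move: h1 h2; rewrite !lex_cons (negbTE nyd) /= andbT orbF.
move=> h1 /orP[/andP[h2 h4]|/andP[/eqP ed /lex_nil eu]]; last by rewrite ed eu eqxx in h3.
by rewrite (hs h1 h2 h4) eqxx in nyd.
Qed.

Lemma prefix_nseq_succ k u : sorted ge u ->
  {in u, forall c, le y c -> le c y' -> c != y' -> c = y} ->
  prefix (nseq k.+1 y) u = [&& lexT (nseq k.+1 y) u, lexT u [:: y'] & u != [:: y']].
Proof.
case: u => [|d u] // hsu hsucc; case: (eqVneq y d) => [eyd|nyd]; last first.
  rewrite prefix_cons (negbTE nyd); apply/esym/negP => /and3P [h1 h2 h3].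
  by apply: (no_between nyd _ h1 h2 h3) => hd1 hd2 hd3; apply: hsucc; rewrite ?mem_head.
subst d; rewrite -[nseq k.+1 y]/(y :: nseq k y) prefix_cons eqxx lex_cons2 !lex_cons.
rewrite le_yy' neq_yy' eqseq_cons (negbTE neq_yy') /= andbT; apply/idP/idP; first exact: prefix_lex.
apply: (@lex_const_prefix y); first by move=> a /nseqP[].
by move=> a au; have := allP (order_path_min (rev_trans le_trans) hsu) a au.
Qed.

Lemma prefix_lex_succ v u : sorted ge (rcons v y) -> sorted ge u ->
  {in u ++ v, forall c, le y c -> le c y' -> c != y' -> c = y} ->
  prefix (rcons v y) u =
  [&& lexT (rcons v y) u, lexT u (maxsub le (rcons v y')) & u != maxsub le (rcons v y')].
Proof.
elim: v u => [|c v IH] u hsv hsu hsucc.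
  by apply: (prefix_nseq_succ 0 hsu) => d du; apply: hsucc; rewrite cats0.
rewrite rcons_cons in hsv *; rewrite [maxsub _ (_ :: _)]/= all_rcons.
have hc : all (le^~ c) (rcons v y) by apply: (order_path_min (rev_trans le_trans) hsv).
have hsv' : sorted ge (rcons v y) by apply: path_sorted hsv.
have hcv : all (le^~ c) v by apply/allP => a av; apply: (allP hc); rewrite mem_rcons inE av orbT.
rewrite hcv andbT; case: (boolP (le y' c)) => hyc.
  case: u hsu hsucc => [|d u] // hsu hsucc.
  case: (eqVneq c d) => [<-|ncd].
    rewrite prefix_cons eqxx !lex_cons2 eqseq_cons eqxx; apply: IH => //.
      exact: path_sorted hsu.
    by move=> a; rewrite mem_cat => /orP[au|av]; apply: hsucc; rewrite mem_cat !inE ?au ?av ?orbT.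
  rewrite prefix_cons (negbTE ncd); apply/esym/negP => /and3P [h1 h2 _].
  move: h1 h2; rewrite !lex_cons (negbTE ncd) eq_sym (negbTE ncd) /= !andbT !orbF => h1 h2.
  by rewrite (le_eq h1 h2) eqxx in ncd.
have ecy : c = y.
  apply: hsucc; first by rewrite mem_cat mem_head orbT.
  - by apply: (allP hc); rewrite mem_rcons mem_head.
  - by have := le_total c y'; rewrite (negbTE hyc) orbF.
  - by apply: contraNneq hyc => ->.
subst c; rewrite maxsub_rcons_top; last first.
  move=> a av; have hay := allP hcv a av; rewrite (le_trans hay le_yy') /=.
  by apply: contra_neq neq_yy' => e; subst a; apply: le_eq.
have /all_pred1P -> : all (pred1 y) (y :: rcons v y).
  apply/allP => a; rewrite inE mem_rcons inE orbA orbb => /orP[/eqP->|av] /=; first exact: eqxx.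
  by apply/eqP/le_eq; [exact: (allP hcv)|exact: (sorted_rcons_ge hsv')].
by apply: prefix_nseq_succ => // d du; apply: hsucc; rewrite mem_cat du.
Qed.

End LexSuccessor.

Lemma maxsub_map (T T' : eqType) (le : rel T') (g : T -> T') s :
  map g (maxsub (relpre g le) s) = maxsub le (map g s).
Proof. by elim: s => //= x s IH; rewrite all_map; case: ifP => _ //=; rewrite IH. Qed.

Local Notation lexn := (lex leq).
Local Notation lexS := (lex lexn).

Lemma lexn_anti : antisymmetric lexn. Proof. exact: lex_anti anti_leq. Qed.
Lemma lexn_trans : transitive lexn. Proof. exact: lex_trans anti_leq leq_trans. Qed.
Lemma lexn_total : total lexn. Proof. exact: lex_total leq_total. Qed.
Lemma lexS_anti : antisymmetric lexS. Proof. exact: lex_anti lexn_anti. Qed.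
Lemma lexS_trans : transitive lexS. Proof. exact: lex_trans lexn_anti lexn_trans. Qed.

Section PreorderByCode.
Variables (R : word -> word -> Prop) (g : word -> seq nat) (D : seq word).
Hypothesis R_code : {in D &, forall x y, R x y <-> lexn (g x) (g y)}.

Lemma pequiv_code : {in D &, forall x y, pequiv R x y <-> g x = g y}.
Proof.
move=> x y hx hy; rewrite /pequiv (R_code hx hy) (R_code hy hx).
by split=> [[h1 h2]|->]; [apply: lexn_anti; rewrite h1 h2|rewrite lex_refl].
Qed.

Lemma plt_code : {in D &, forall x y, plt R x y <-> lexn (g x) (g y) && (g x != g y)}.
Proof.
move=> x y hx hy; rewrite /plt (R_code hx hy) (R_code hy hx).
split=> [[-> h2]|/andP[h1 h2]].
  by apply/eqP=> e; apply: h2; rewrite e lex_refl.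
by split=> // h3; rewrite (@lexn_anti (g x) (g y)) ?h1 ?h3 ?eqxx in h2.
Qed.

Lemma lexle_code c d : {subset c <= D} -> {subset d <= D} ->
  lexle R c d <-> lexS (map g c) (map g d).
Proof.
move=> hc hd; rewrite (lex_nthP _ (g [::])) !size_map /lexle.
have Ec i : i < size c -> nth (g [::]) (map g c) i = g (nth [::] c i).
  by move=> hi; rewrite (nth_map [::]).
have Ed i : i < size d -> nth (g [::]) (map g d) i = g (nth [::] d i).
  by move=> hi; rewrite (nth_map [::]).
have Mc i : i < size c -> nth [::] c i \in D by move=> hi; apply/hc/mem_nth.
have Md i : i < size d -> nth [::] d i \in D by move=> hi; apply/hd/mem_nth.
split=> [[[h1 h2]|[k [h1 [h2 h3]]]]|[[h1 h2]|[k [h1 h2 h3]]]].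
- left; split=> // i hi; have hi' : i < size d by apply: leq_trans h1.
  by rewrite Ec // Ed //; apply/pequiv_code; [apply: Mc|apply: Md|apply: h2].
- have hkc : k < size c by apply: leq_trans h1 (geq_minl _ _).
  have hkd : k < size d by apply: leq_trans h1 (geq_minr _ _).
  right; exists k; split=> //.
    move=> i hi; have hic := ltn_trans hi hkc; have hid := ltn_trans hi hkd.
    by rewrite Ec // Ed //; apply/pequiv_code; [apply: Mc|apply: Md|apply: h2].
  by rewrite Ec // Ed //; apply/plt_code; [apply: Mc|apply: Md|].
- left; split=> // i hi; have hi' : i < size d by apply: leq_trans h1.
  by apply/(pequiv_code (Mc _ hi) (Md _ hi')); rewrite -Ec // -Ed //; apply: h2.
- have hkc : k < size c by apply: leq_trans h1 (geq_minl _ _).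
  have hkd : k < size d by apply: leq_trans h1 (geq_minr _ _).
  right; exists k; do 2!split=> //.
    move=> i hi; have hic := ltn_trans hi hkc; have hid := ltn_trans hi hkd.
    by apply/(pequiv_code (Mc _ hic) (Md _ hid)); rewrite -Ec // -Ed //; apply: h2.
  by apply/(plt_code (Mc _ hkc) (Md _ hkd)); rewrite -Ec // -Ed.
Qed.

Let maxsubD s := maxsub (relpre g lexn) s.

Lemma lexmax_maxsub s : {subset s <= D} -> lexmax R s (maxsubD s).
Proof.
move=> hs; split=> [|c' hc']; first exact: maxsub_subseq.
apply/lexle_code.
- by move=> x /(mem_subseq hc') /hs.
- by move=> x /(mem_subseq (maxsub_subseq _ _)) /hs.
rewrite maxsub_map; apply: (maxsub_max (lex_refl _) lexn_anti lexn_trans lexn_total).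
exact: map_subseq.
Qed.

Lemma lexmax_code s C : {subset s <= D} -> lexmax R s C -> map g C = maxsub lexn (map g s).
Proof.
move=> hs [hC hmax].
have hCD : {subset C <= D} by move=> x /(mem_subseq hC) /hs.
have hmD : {subset maxsubD s <= D} by move=> x /(mem_subseq (maxsub_subseq _ _)) /hs.
rewrite -maxsub_map; apply: lexS_anti; apply/andP; split; apply/lexle_code => //.
  by case: (lexmax_maxsub hs) => _; apply.
by apply/hmax/maxsub_subseq.
Qed.

Lemma lexle_lexmax_code s t : {subset s <= D} -> {subset t <= D} ->
  (exists C D', lexmax R s C /\ lexmax R t D' /\ lexle R C D') <->
  lexS (maxsub lexn (map g s)) (maxsub lexn (map g t)).
Proof.
move=> hs ht; have subD u C : {subset u <= D} -> lexmax R u C -> {subset C <= D}.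
  by move=> hu [hC _] x /(mem_subseq hC) /hu.
split=> [[C [D' [hC [hD' hCD]]]]|h].
  rewrite -(lexmax_code hs hC) -(lexmax_code ht hD').
  by apply/(lexle_code (subD _ _ hs hC) (subD _ _ ht hD')).
exists (maxsubD s), (maxsubD t); have [hCs hCt] := (lexmax_maxsub hs, lexmax_maxsub ht).
by do 2!split=> //; apply/(lexle_code (subD _ _ hs hCs) (subD _ _ ht hCt)); rewrite !maxsub_map.
Qed.

End PreorderByCode.

(** * Coding words *)

(* Reading nonzero letters as openings and [0] as a closing, [block h w] is the
   shortest prefix of [w] closing [h.+1] levels.  The words [x] that are blocks
   of all their extensions form a prefix code. *)
Fixpoint block (h : nat) (w : seq nat) : seq nat :=
  match w with
  | [::] => [::]
  | a :: w' =>
      if a == 0 then (if h is h'.+1 then a :: block h' w' else [:: a])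
      else a :: block h.+1 w'
  end.

Definition is_block (x : seq nat) :=
  (forall s, block 0 (x ++ s) = x) /\ (forall h s, block h.+1 (x ++ s) = x ++ block h s).

Definition pack (r : seq (seq nat)) : seq nat := flatten (map (cons 2) r) ++ [:: 0].

Lemma pack_cons c r : pack (c :: r) = 2 :: c ++ pack r.
Proof. by rewrite /pack /= catA. Qed.

Lemma pack_block r : {in r, forall c, is_block c} -> is_block (pack r).
Proof.
elim: r => [|c r IH] hr; first by split.
have [hc1 hc2] := hr c (mem_head _ _).
have [hr1 hr2] : is_block (pack r) by apply: IH => x xr; apply: hr; rewrite inE xr orbT.
by rewrite pack_cons; split=> [s|h s] /=; rewrite -catA hc2 ?hr1 ?hr2 ?catA.
Qed.

Lemma block_prefix_free x y s t : is_block x -> is_block y -> x ++ s = y ++ t -> x = y.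
Proof. by case=> hx _ [hy _] e; rewrite -(hx s) e hy. Qed.

Lemma lexn_cat_block x y s t :
  is_block x -> is_block y -> x != y -> lexn (x ++ s) (y ++ t) = lexn x y.
Proof.
move=> hx hy nxy; apply: lex_cat_noprefix => w; apply/eqP => e.
  by move: nxy; rewrite (@block_prefix_free x y w [::] hx hy) ?cats0 ?e ?eqxx.
by move: nxy; rewrite (@block_prefix_free y x w [::] hy hx) ?cats0 ?e ?eqxx.
Qed.

Lemma lex_pack r r' : {in r, forall c, is_block c} -> {in r', forall c, is_block c} ->
  lexn (pack r) (pack r') = lexS r r'.
Proof.
elim: r r' => [|c r IH] [|d r'] hr hr' //.
rewrite !pack_cons !lex_cons2 lex_cons.
have bc := hr c (mem_head _ _); have bd := hr' d (mem_head _ _).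
case: (eqVneq c d) => [<-|ncd] /=; last by rewrite lexn_cat_block // andbT orbF.
rewrite lex_catl andbF IH // => x xin; [apply: hr|apply: hr']; by rewrite inE xin orbT.
Qed.

Lemma pack_inj r r' : {in r, forall c, is_block c} -> {in r', forall c, is_block c} ->
  pack r = pack r' -> r = r'.
Proof. by move=> hr hr' e; apply: lexS_anti; rewrite -!lex_pack // e lex_refl. Qed.

Lemma pack_eq0F r : (pack r == [::]) = false.
Proof. by rewrite /pack; case: (flatten _). Qed.

Lemma pack_eq_nil0 r : (pack r == [:: 0]) = (r == [::]).
Proof. by case: r => // c r; rewrite pack_cons. Qed.

Lemma lex_nil0 c : c != [::] -> lexn [:: 0] c.
Proof. by case: c => // -[|a] c. Qed.

Lemma lex_nil0r c : c != [::] -> lexn c [:: 0] = (c == [:: 0]).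
Proof. by case: c => // -[|a] [|b c]. Qed.

Lemma splitw_cons n a A : splitw n (a :: A) =
  if a == n then [::] :: splitw n A
  else (a :: head [::] (splitw n A)) :: behead (splitw n A).
Proof. by []. Qed.

Lemma splitw_neq0 n A : splitw n A != [::].
Proof. by case: A => // a A; rewrite splitw_cons; case: ifP. Qed.

Lemma size_splitw n A : size (splitw n A) = (count_mem n A).+1.
Proof.
elim: A => // a A IH; rewrite splitw_cons /=.
by case: (eqVneq a n) => [_|nan] /=; rewrite ?size_behead IH.
Qed.

Lemma mem_splitw n A P x : P \in splitw n A -> x \in P -> (x \in A) && (x != n).
Proof.
elim: A P => [|a A IH] P; first by rewrite inE => /eqP->.
have inA y : (y \in A) && (y != n) -> (y \in a :: A) && (y != n).
  by case/andP=> h1 h2; rewrite inE h1 h2 orbT.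
rewrite splitw_cons; case: (eqVneq a n) => [ean|nan].
  by rewrite inE => /orP[/eqP->//|/IH h /h /inA].
case E: (splitw n A) (splitw_neq0 n A) IH => [|Q S] // _ IH.
rewrite inE => /orP[/eqP->|PS].
  rewrite inE => /orP[/eqP->|xQ]; first by rewrite inE eqxx.
  by apply/inA/(IH Q); rewrite ?mem_head.
by move=> xP; apply/inA/(IH P); rewrite // inE PS orbT.
Qed.

Lemma splitw_notin n A : n \notin A -> splitw n A = [:: A].
Proof.
elim: A => // a A IH; rewrite inE negb_or => /andP[na nA].
by rewrite splitw_cons eq_sym (negbTE na) IH.
Qed.

Lemma joinw_splitw n A : joinw n (splitw n A) = A.
Proof.
elim: A => // a A; rewrite splitw_cons.
case: (splitw n A) (splitw_neq0 n A) => [|P S] // _ IH.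
by case: (eqVneq a n) => [->|nan] /=; rewrite -IH.
Qed.

Lemma splitw_cat n C w : n \notin C ->
  splitw n (C ++ w) = (C ++ head [::] (splitw n w)) :: behead (splitw n w).
Proof.
elim: C => [|a C IH]; first by case: (splitw n w) (splitw_neq0 n w).
rewrite inE negb_or => /andP[na nC].
by rewrite cat_cons splitw_cons eq_sym (negbTE na) IH.
Qed.

Lemma splitw_joinw n (Cs : seq word) : Cs != [::] -> {in Cs, forall C, n \notin C} ->
  splitw n (joinw n Cs) = Cs.
Proof.
have tail (Ds : seq word) : {in Ds, forall C, n \notin C} ->
    splitw n (flatten [seq n :: X | X <- Ds]) = [::] :: Ds.
  elim: Ds => // D Ds IH h.
  rewrite [flatten _]/= splitw_cons eqxx splitw_cat ?IH ?cats0 ?(h D (mem_head _ _)) //.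
  by move=> C CDs; apply: h; rewrite inE CDs orbT.
case: Cs => // C Cs _ h /=.
rewrite splitw_cat ?tail ?cats0 ?(h C (mem_head _ _)) //.
by move=> D DCs; apply: h; rewrite inE DCs orbT.
Qed.

Lemma splitw_rcons n A x : x != n ->
  exists bs bl, splitw n A = rcons bs bl /\ splitw n (rcons A x) = rcons bs (rcons bl x).
Proof.
move=> xn; elim: A => [|a A [bs [bl [E1 E2]]]].
  by exists [::], [::]; rewrite [rcons _ _]/= splitw_cons (negbTE xn).
rewrite rcons_cons !splitw_cons E1 E2; case: ifP => _; first by exists ([::] :: bs), bl.
by case: bs {E1 E2} => [|c bs] /=; [exists [::], (a :: bl)|exists ((a :: c) :: bs), bl].
Qed.

Lemma splitw_rcons_sep n A : splitw n (rcons A n) = rcons (splitw n A) [::].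
Proof.
elim: A => [|a A IH]; first by rewrite [rcons _ _]/= splitw_cons eqxx.
rewrite rcons_cons !splitw_cons IH; case: ifP => // _.
by case: (splitw n A) (splitw_neq0 n A).
Qed.

Lemma mem_joinw n (Cs : seq word) x :
  x \in joinw n Cs -> (x == n) || has (fun C => x \in C) Cs.
Proof.
case: Cs => // C Cs; elim: Cs C => [|D Cs IH] C.
  by rewrite /= cats0 => ->; rewrite orbT.
rewrite [joinw _ _]/= mem_cat inE -/(joinw n (D :: Cs)) => /orP[h|/orP[->//|/IH]].
  by rewrite /= h orbT.
case/orP=> [->//|/hasP [X hX xX]]; apply/orP; right.
by apply/hasP; exists X; rewrite // inE hX orbT.
Qed.

Lemma mem_sep_joinw n (Cs : seq word) : 1 < size Cs -> n \in joinw n Cs.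
Proof. by case: Cs => [|C [|D Cs]] // _; rewrite /= mem_cat inE eqxx orbT. Qed.

Lemma minsym_le s x : x \in s -> minsym s <= x.
Proof.
rewrite /minsym; elim: s (head 0 s) => //= a s IH d.
by rewrite inE geq_min => /orP[/eqP->|/IH ->]; rewrite ?leqnn ?orbT.
Qed.

Lemma minsym_in s : s != [::] -> minsym s \in s.
Proof.
have hin d t : foldr minn d t \in d :: t.
  elim: t => [|a t IH] /=; first by rewrite mem_head.
  rewrite /minn; case: ifP => _; first by rewrite !inE eqxx orbT.
  by move: IH; rewrite !inE => /orP[->|->]; rewrite ?orbT.
case: s => // a s _; rewrite /minsym [head _ _]/=.
by move: (hin a (a :: s)); rewrite inE => /orP[/eqP->|//]; rewrite mem_head.
Qed.

Lemma minsym_eq n A : Sk n A -> n \in A -> minsym A = n.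
Proof.
move=> hS hn; apply/eqP; rewrite eqn_leq minsym_le //=.
by apply: (allP hS); apply: minsym_in; case: A hn {hS}.
Qed.

Lemma maxsym_ge s x : x \in s -> x <= maxsym s.
Proof.
elim: s => // a s IH; rewrite inE /maxsym /= -/(maxsym s) leq_max.
by case/orP=> [/eqP->|/IH ->]; rewrite ?leqnn ?orbT.
Qed.

Lemma maxsym_le s M : {in s, forall x, x <= M} -> maxsym s <= M.
Proof.
elim: s => // a s IH h; rewrite /maxsym /= -/(maxsym s) geq_max h ?mem_head //=.
by apply: IH => x xs; apply: h; rewrite inE xs orbT.
Qed.

Definition in_range (n K : nat) (A : word) : bool := all (fun x => n <= x < n + K) A.

Lemma in_range_cat n K A B : in_range n K (A ++ B) = in_range n K A && in_range n K B.
Proof. exact: all_cat. Qed.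

Lemma in_range0 n A : in_range n 0 A -> A = [::].
Proof. by case: A => //= x A; rewrite addn0 => /andP[/andP[h1 h2] _]; lia. Qed.

Lemma in_range_notin n K A : in_range n.+1 K A -> n \notin A.
Proof. by move=> /allP h; apply/negP => /h; rewrite ltnn. Qed.

Lemma in_range_weaken n n' K K' A : n' <= n -> n + K <= n' + K' ->
  in_range n K A -> in_range n' K' A.
Proof. by move=> h1 h2 /allP h; apply/allP => x /h /andP[hx1 hx2]; apply/andP; lia. Qed.

Lemma in_range_splitw n K A P : in_range n K.+1 A -> P \in splitw n A -> in_range n.+1 K P.
Proof.
move=> /allP hA hP; apply/allP => x hx; have /andP[xA xn] := mem_splitw hP hx.
by move: (hA x xA) xn => /andP[h1 h2] /eqP h3; apply/andP; lia.
Qed.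

(* Meant for words all of whose symbols lie in [n, n + K). *)
Fixpoint enc (K n : nat) (A : word) : seq nat :=
  if K is K'.+1 then
    if A == [::] then [:: 0] else pack (maxsub lexn (map (enc K' n.+1) (splitw n A)))
  else [:: 0].

Lemma enc_nil K n : enc K n [::] = [:: 0].
Proof. by case: K. Qed.

Lemma encS K n A : A != [::] ->
  enc K.+1 n A = pack (maxsub lexn (map (enc K n.+1) (splitw n A))).
Proof. by move=> /negbTE /= ->. Qed.

Lemma enc_block K n A : is_block (enc K n A).
Proof.
elim: K n A => [|K IH] n A /=; first by split.
case: ifP => _; first by split.
by apply: pack_block => c /(mem_subseq (maxsub_subseq _ _)) /mapP [P _ ->].
Qed.

Lemma enc_neq0 K n A : enc K n A != [::].
Proof. by case: K => //= K; case: ifP => // _; rewrite pack_eq0F. Qed.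

Lemma enc_eq_nil0 K n A : 0 < K -> (enc K n A == [:: 0]) = (A == [::]).
Proof.
case: K => // K _; case: (eqVneq A [::]) => [->|nA] //.
by rewrite encS // pack_eq_nil0 maxsub_eq0 -size_eq0 size_map size_eq0 (negbTE (splitw_neq0 _ _)).
Qed.

Lemma enc_wrap K n (A : word) : n \notin A -> A != [::] -> enc K.+1 n A = pack [:: enc K n.+1 A].
Proof. by move=> hn hA; rewrite encS // splitw_notin. Qed.

Lemma lex_enc_shift1 K n A B : in_range n.+1 K (A ++ B) ->
  lexn (enc K.+1 n A) (enc K.+1 n B) = lexn (enc K n.+1 A) (enc K n.+1 B).
Proof.
rewrite in_range_cat => /andP[hA hB].
case: (eqVneq A [::]) => [->|nA]; first by rewrite !enc_nil !lex_nil0 ?enc_neq0.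
have K0 : 0 < K by case: K hA {hB} => // /in_range0 eA; rewrite eA eqxx in nA.
have [nA' nB'] := (in_range_notin hA, in_range_notin hB).
case: (eqVneq B [::]) => [->|nB].
  by rewrite !enc_nil enc_wrap // !lex_nil0r ?enc_neq0 // pack_eq_nil0 enc_eq_nil0 // (negbTE nA).
rewrite !enc_wrap // lex_pack ?(lex_seq1 (lex_refl leq)) // => c.
all: by rewrite inE => /eqP->; apply: enc_block.
Qed.

Lemma lex_enc_shift k n K A B : in_range (n + k) K (A ++ B) ->
  lexn (enc (k + K) n A) (enc (k + K) n B) = lexn (enc K (n + k) A) (enc K (n + k) B).
Proof.
elim: k n => [|k IH] n hAB; first by rewrite addn0.
rewrite addSn lex_enc_shift1; last by apply: (in_range_weaken _ _ hAB); lia.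
by rewrite -addSnnS; apply: IH; rewrite addSnnS.
Qed.

Lemma maxsub_enc_block K n X c : c \in maxsub lexn (map (enc K n) X) -> is_block c.
Proof. by move=> /(mem_subseq (maxsub_subseq _ _)) /mapP [P _ ->]; apply: enc_block. Qed.

Lemma lex_nil0_maxsub v : {in v, forall c, c != [::]} -> 1 < size v ->
  lexS [:: [:: 0]] (maxsub lexn v) && (maxsub lexn v != [:: [:: 0]]).
Proof.
case: v => // c v hv hs.
have h1 : lexS [:: [:: 0]] (c :: v).
  by rewrite lex_cons lex_nil0 ?hv ?mem_head //=; case: eqP; rewrite ?orbT.
have h2 : lexS (c :: v) (maxsub lexn (c :: v)).
  exact: (maxsub_max (lex_refl _) lexn_anti lexn_trans lexn_total (subseq_refl _)).
rewrite (lexS_trans h1 h2); apply/eqP=> e; rewrite e in h2.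
by move: hs; rewrite (@lexS_anti (c :: v) [:: [:: 0]]) ?h1 ?h2.
Qed.

Lemma lex_enc_blocks K m A B : m \in A ++ B ->
  lexn (enc K.+1 m A) (enc K.+1 m B) =
  lexS (maxsub lexn (map (enc K m.+1) (splitw m A))) (maxsub lexn (map (enc K m.+1) (splitw m B))).
Proof.
move=> hm; have blocks_nonempty X : m \in X ->
    lexS [:: [:: 0]] (maxsub lexn (map (enc K m.+1) (splitw m X))) &&
    (maxsub lexn (map (enc K m.+1) (splitw m X)) != [:: [:: 0]]).
  move=> hX; apply: lex_nil0_maxsub; first by move=> c /mapP [P _ ->]; apply: enc_neq0.
  by rewrite size_map size_splitw ltnS lt0n; apply/eqP/count_memPn; rewrite hX.
have split_nil : map (enc K m.+1) (splitw m [::]) = [:: [:: 0]] by rewrite /= enc_nil.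
case: (eqVneq A [::]) => [eA|nA].
  have mB : m \in B by move: hm; rewrite eA.
  have /andP[h _] := blocks_nonempty B mB.
  by rewrite eA split_nil enc_nil lex_nil0 ?enc_neq0 // [maxsub _ [:: _]]/= h.
case: (eqVneq B [::]) => [eB|nB].
  have mA : m \in A by move: hm; rewrite eB cats0.
  have /andP[h1 h2] := blocks_nonempty A mA.
  rewrite eB split_nil enc_nil lex_nil0r ?enc_neq0 // enc_eq_nil0 //.
  rewrite (negbTE nA) [maxsub _ [:: _]]/=.
  by apply/esym/negP => h3; move: h2; rewrite (lexS_anti (introT andP (conj h3 h1))) eqxx.
by rewrite !encS // lex_pack //; apply: maxsub_enc_block.
Qed.

Lemma splitw_minsym (A B P : word) x (m := minsym (A ++ B)) :
  P \in splitw m A ++ splitw m B -> x \in P -> (x \in A ++ B) && (m < x).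
Proof.
rewrite mem_cat => hP hx.
have /andP[xAB xm] : (x \in A ++ B) && (x != m).
  case/orP: hP => /mem_splitw /(_ hx) /andP[h ->]; by rewrite mem_cat h ?orbT.
by rewrite xAB ltn_neqAle eq_sym xm minsym_le.
Qed.

Theorem wle_rec_enc f n K A B : in_range n K (A ++ B) ->
  (A ++ B != [::] -> maxsym (A ++ B) - minsym (A ++ B) < f) ->
  (wle_rec f A B <-> lexn (enc K n A) (enc K n B)).
Proof.
elim: f n K A B => [|f IH] n K A B hAB hf /=.
all: case: (eqVneq (A ++ B) [::]) => [|nAB];
  first by case: A B {hAB hf} => [|? ?] [|? ?] //; rewrite !enc_nil.
  by move: (hf nAB); rewrite ltn0.
set m := minsym (A ++ B).
have hm : m \in A ++ B by apply: minsym_in.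
have /andP[hnm hmK] : n <= m < n + K by apply: (allP hAB).
have [K' eK] : exists K', K = (m - n) + K'.+1 by exists (K - (m - n)).-1; lia.
rewrite eK lex_enc_shift subnKC //; last first.
  by apply/allP => x hx; rewrite minsym_le //=; have /andP[_] := allP hAB x hx; lia.
rewrite lex_enc_blocks //; apply: (@lexle_lexmax_code _ _ (splitw m A ++ splitw m B)); last 2 first.
- by move=> P hP; rewrite mem_cat hP.
- by move=> P hP; rewrite mem_cat hP orbT.
move=> P Q hP hQ; have hPQ x : x \in P ++ Q -> (x \in A ++ B) && (m < x).
  by rewrite mem_cat => /orP[/(splitw_minsym hP)|/(splitw_minsym hQ)].
apply: IH.
  by apply/allP => x /hPQ /andP[/(allP hAB) /andP[_ hx] hmx]; apply/andP; lia.
move=> nPQ; have := hf nAB.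
have : maxsym (P ++ Q) <= maxsym (A ++ B).
  by apply: maxsym_le => x /hPQ /andP[xAB _]; apply: maxsym_ge.
have /hPQ /andP[_] := minsym_in nPQ.
have := maxsym_ge (minsym_in nPQ).
rewrite -[minsym (A ++ B)]/m; clearbody m.
move: (maxsym (P ++ Q)) (minsym (P ++ Q)) (maxsym (A ++ B)) => a b c; lia.
Qed.

Lemma wle_enc n K A B : in_range n K (A ++ B) -> (wle A B <-> lexn (enc K n A) (enc K n B)).
Proof. by move=> hAB; apply: wle_rec_enc. Qed.

Local Notation lex_sorted := (sorted (fun x y => lexn y x)).

(** * Normal forms *)

Lemma NF_splitw A : NF A -> A != [::] ->
  [/\ 2 <= size (splitw (minsym A) A),
      forall i, i.+1 < size (splitw (minsym A) A) ->
        wle (nth [::] (splitw (minsym A) A) i.+1) (nth [::] (splitw (minsym A) A) i) &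
      {in splitw (minsym A) A, forall P, NF P}].
Proof. by case=> // A' _ h1 h2 h3 _; split. Qed.

Lemma NF_blocks n K A : NF A -> in_range n K.+1 A ->
  {in splitw n A, forall P, NF P} /\ lex_sorted (map (enc K n.+1) (splitw n A)).
Proof.
move=> hNF hA; case: (boolP (n \in A)) => hn; last first.
  by rewrite splitw_notin //; split=> // P; rewrite inE => /eqP->.
have nA : A != [::] by case: (A) hn.
have eA : minsym A = n by apply: minsym_eq => //; apply/allP => x /(allP hA) /andP[].
have [_ hsorted hNFs] := NF_splitw hNF nA; rewrite eA in hsorted hNFs.
split=> //; apply/(sortedP [::]) => i; rewrite size_map => hi.
have hi' : i < size (splitw n A) by apply: ltnW.
rewrite (nth_map [::]) // (nth_map [::]) //; apply/wle_enc/(hsorted i hi).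
by rewrite in_range_cat !(in_range_splitw hA) ?mem_nth.
Qed.

Lemma enc_inj K n A B : in_range n K A -> in_range n K B -> NF A -> NF B ->
  enc K n A = enc K n B -> A = B.
Proof.
elim: K n A B => [|K IH] n A B hA hB nfA nfB; first by rewrite (in_range0 hA) (in_range0 hB).
case: (eqVneq A [::]) => [->|nA]; case: (eqVneq B [::]) => [->|nB] //.
- by rewrite enc_nil => /esym/eqP; rewrite enc_eq_nil0 // (negbTE nB).
- by rewrite enc_nil => /eqP; rewrite enc_eq_nil0 // (negbTE nA).
have [nfsA sA] := NF_blocks nfA hA; have [nfsB sB] := NF_blocks nfB hB.
rewrite !encS // !(maxsub_id lexn_trans) // => /pack_inj e.
rewrite -(joinw_splitw n A) -(joinw_splitw n B); congr joinw.
pose bl := [pred X | X \in splitw n A ++ splitw n B].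
have blP X : X \in bl -> in_range n.+1 K X /\ NF X.
  rewrite inE mem_cat => /orP[hX|hX].
    by split; [apply: in_range_splitw hA hX|apply: nfsA].
  by split; [apply: in_range_splitw hB hX|apply: nfsB].
apply: (@inj_in_map _ _ (enc K n.+1) bl).
- by move=> X Y /blP[hX nfX] /blP[hY nfY]; apply: IH.
- by rewrite inE; apply/allP => X hX; rewrite inE mem_cat hX.
- by rewrite inE; apply/allP => X hX; rewrite inE mem_cat hX orbT.
by apply: e => c /mapP [X _ ->]; apply: enc_block.
Qed.

Lemma maxsub_blocks_neq_nil0 K n A : A != [::] -> in_range n K.+1 A ->
  maxsub lexn (map (enc K n.+1) (splitw n A)) != [:: [:: 0]].
Proof.
move=> nA hA; case: (boolP (n \in A)) => hn.
  apply: (@proj2 (lexS [:: [:: 0]] _)); apply/andP/lex_nil0_maxsub.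
    by move=> c /mapP [P _ ->]; apply: enc_neq0.
  by rewrite size_map size_splitw ltnS lt0n; apply/eqP/count_memPn.
have hA' : in_range n.+1 K A by apply: in_range_splitw hA _; rewrite splitw_notin ?mem_head.
have K0 : 0 < K by case: K {hA} hA' => // /in_range0 eA; rewrite eA eqxx in nA.
by rewrite splitw_notin //= eqseq_cons andbT enc_eq_nil0.
Qed.

Lemma NF_joinw n K Ns : 1 < size Ns -> {in Ns, forall N, in_range n.+1 K N /\ NF N} ->
  lex_sorted (map (enc K n.+1) Ns) ->
  [/\ in_range n K.+1 (joinw n Ns), NF (joinw n Ns) &
      enc K.+1 n (joinw n Ns) = pack (map (enc K n.+1) Ns)].
Proof.
move=> hs hNs hsorted.
have hn : {in Ns, forall C, n \notin C} by move=> C /hNs [/in_range_notin].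
have sN : splitw n (joinw n Ns) = Ns by apply: splitw_joinw => //; case: (Ns) hs.
have hin : n \in joinw n Ns by apply: mem_sep_joinw.
have nN : joinw n Ns != [::] by case: (joinw n Ns) hin.
have hr : in_range n K.+1 (joinw n Ns).
  apply/allP => x /mem_joinw /orP[/eqP->|/hasP [C /hNs [/allP hC _] /hC]].
    by rewrite leqnn addnS ltnS leq_addr.
  by rewrite addSnnS; case/andP => h1 h2; rewrite ltnW.
split=> //; last by rewrite encS // sN (maxsub_id lexn_trans).
have hm : minsym (joinw n Ns) = n by apply: minsym_eq => //; apply/allP => x /(allP hr) /andP[].
apply: NF_cons; rewrite ?hm ?sN //.
- by apply/eqP.
- move=> i hi; have hi' : i < size Ns by apply: ltnW.
  have := (sortedP [::] hsorted) i.
  rewrite size_map (nth_map [::]) // (nth_map [::]) // => /(_ hi) h.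
  apply/(wle_enc (n := n.+1) (K := K)) => //.
  by rewrite in_range_cat; apply/andP; split; apply/(proj1 (hNs _ _))/mem_nth.
- by move=> P /hNs [].
Qed.

Lemma NF_enc_exists K n A : in_range n K A ->
  exists2 N, in_range n K N /\ NF N & enc K n N = enc K n A.
Proof.
elim: K n A => [|K IH] n A hA.
  by rewrite (in_range0 hA); exists [::]; split=> //; apply: NF_nil.
case: (eqVneq A [::]) => [->|nA]; first by exists [::]; split=> //; apply: NF_nil.
set g := enc K n.+1.
have [Ns eNs hNs] : exists2 Ns, map g Ns = maxsub lexn (map g (splitw n A)) &
    {in Ns, forall N, in_range n.+1 K N /\ NF N}.
  apply: exists_map_preim => u /(mem_subseq (maxsub_subseq _ _)) /mapP [X hX ->].
  by have [N] := IH n.+1 X (in_range_splitw hA hX); exists N.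
have hsorted : lex_sorted (map g Ns) by rewrite eNs; apply: maxsub_sorted lexn_trans _.
have encA : enc K.+1 n A = pack (map g Ns) by rewrite encS // eNs.
case: Ns eNs hNs hsorted encA => [|N1 [|N2 Ns]] eNs hNs hsorted encA.
- by move/esym/eqP: eNs; rewrite maxsub_eq0 -size_eq0 size_map size_eq0 (negbTE (splitw_neq0 _ _)).
- have [hN1 nfN1] := hNs N1 (mem_head _ _).
  have nN1 : N1 != [::].
    by apply: contraNneq (maxsub_blocks_neq_nil0 nA hA) => e1; rewrite -eNs e1 /= /g enc_nil.
  exists N1; last by rewrite encA enc_wrap ?(in_range_notin hN1).
  by split=> //; apply: in_range_weaken hN1; rewrite ?addSnnS.
- have [hr nf e] := NF_joinw (isT : 1 < size [:: N1, N2 & Ns]) hNs hsorted.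
  by exists (joinw n [:: N1, N2 & Ns]); rewrite ?e.
Qed.

(** * Slices *)

Lemma enc_rcons_sep K n b :
  enc K.+1 n (rcons b n) = pack (rcons (maxsub lexn (map (enc K n.+1) (splitw n b))) [:: 0]).
Proof.
rewrite encS; last by case: b.
rewrite splitw_rcons_sep map_rcons enc_nil maxsub_rcons //.
by move=> a /mapP [P _ ->]; apply/lex_nil0/enc_neq0.
Qed.

Lemma lex_enc_rcons_sep K n b :
  lexn (enc K.+1 n b) (enc K.+1 n (rcons b n)) && (enc K.+1 n b != enc K.+1 n (rcons b n)).
Proof.
rewrite enc_rcons_sep; set R := maxsub _ _.
have bR : {in rcons R [:: 0], forall c, is_block c}.
  move=> c; rewrite mem_rcons inE => /orP[/eqP->|/maxsub_enc_block //].
  exact: (enc_block 0 0 [::]).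
case: (eqVneq b [::]) => [->|nb].
  by rewrite enc_nil lex_nil0 ?pack_eq0F //= eq_sym pack_eq_nil0 -size_eq0 size_rcons.
have bR' : {in R, forall c, is_block c} by move=> c /maxsub_enc_block.
rewrite encS // -/R lex_pack // prefix_lex ?prefix_rcons //=.
by apply/eqP => /(pack_inj bR' bR) /(congr1 size); rewrite size_rcons => /n_Sn.
Qed.

Lemma enc_below_sep K n P : in_range n K.+1 P ->
  lexn (enc K.+1 n P) (enc K.+1 n [:: n]) -> enc K.+1 n P != enc K.+1 n [:: n] -> P = [::].
Proof.
move=> hP; case: (eqVneq P [::]) => // nP.
have nil0 : [:: 0] = enc K n.+1 [::] by rewrite enc_nil.
rewrite -[[:: n]]/(rcons [::] n) enc_rcons_sep encS // /= -nil0.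
set S := maxsub _ _; have bS : {in S, forall c, is_block c} by move=> c /maxsub_enc_block.
have b00 : {in [:: [:: 0]; [:: 0]], forall c, is_block c}.
  by move=> c; rewrite !inE => /orP[]/eqP->; rewrite nil0; apply: enc_block.
rewrite lex_pack // => hle hne.
have S0 : S != [:: [:: 0]] by apply: maxsub_blocks_neq_nil0.
have S1 : S != [::] by rewrite maxsub_eq0 -size_eq0 size_map size_eq0 splitw_neq0.
have hS : {in S, forall c, lexn [:: 0] c}.
  by move=> c /(mem_subseq (maxsub_subseq _ _)) /mapP [X _ ->]; apply/lex_nil0/enc_neq0.
have h00 : {in [:: [:: 0]; [:: 0]], forall c, c = [:: 0]} by move=> c; rewrite !inE => /orP[]/eqP.
move: (lex_bot_prefix lexn_anti hS h00 hle) => {hS hle bS}.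
case: S hne S0 S1 => [|a [|b [|c S]]] hne S0 S1 //.
- by rewrite prefix_cons andbT => /eqP ea; rewrite ea eqxx in S0.
- by rewrite !prefix_cons andbT => /andP[/eqP ea /eqP eb]; rewrite ea eb eqxx in hne.
- by move/size_prefix.
Qed.

Lemma enc_rcons_sep_succ K n P b : in_range n K.+1 P ->
  lexn (enc K.+1 n b) (enc K.+1 n P) -> lexn (enc K.+1 n P) (enc K.+1 n (rcons b n)) ->
  enc K.+1 n P != enc K.+1 n (rcons b n) -> enc K.+1 n P = enc K.+1 n b.
Proof.
move=> hP h1 h2 h3; case: (eqVneq b [::]) => [eb|nb].
  by rewrite eb (enc_below_sep hP) // -[[:: n]]/(rcons [::] n) -eb.
case: (eqVneq P [::]) => [eP|nP].
  by move: h1; rewrite eP enc_nil lex_nil0r ?enc_neq0 // enc_eq_nil0 // (negbTE nb).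
move: h1 h2 h3; rewrite enc_rcons_sep !encS //.
set R := maxsub _ (map _ (splitw n b)); set S := maxsub _ _.
have bR : {in R, forall c, is_block c} by move=> c /maxsub_enc_block.
have bS : {in S, forall c, is_block c} by move=> c /maxsub_enc_block.
have bR0 : {in rcons R [:: 0], forall c, is_block c}.
  by move=> c; rewrite mem_rcons inE => /orP[/eqP->|/bR //]; apply: (enc_block 0 0 [::]).
rewrite !lex_pack // => h1 h2 h3; congr pack; apply: (lex_between lexn_anti _ h1 h2).
  by move=> c /(mem_subseq (maxsub_subseq _ _)) /mapP [X _ ->]; apply/lex_nil0/enc_neq0.
by apply: contra_neq h3 => ->.
Qed.

Lemma enc_inj_blocks K n A B : in_range n K.+1 A -> NF A -> in_range n K.+1 B -> NF B ->
  {in splitw n A ++ splitw n B &, injective (enc K n.+1)}.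
Proof.
move=> hA nfA hB nfB; have [nfsA _] := NF_blocks nfA hA; have [nfsB _] := NF_blocks nfB hB.
have blk Z : Z \in splitw n A ++ splitw n B -> in_range n.+1 K Z /\ NF Z.
  by rewrite mem_cat => /orP[] hZ; split; [exact: in_range_splitw hA hZ|exact: nfsA
    |exact: in_range_splitw hB hZ|exact: nfsB].
by move=> X Y /blk[hX nfX] /blk[hY nfY]; apply: enc_inj.
Qed.

Theorem slice_enc n K A B : in_range n K.+2 A -> NF A -> in_range n K.+2 B -> NF B -> B != [::] ->
  (A != [::]) && prefix (splitw n B) (splitw n A) =
  [&& lexn (enc K.+2 n B) (enc K.+2 n A), lexn (enc K.+2 n A) (enc K.+2 n (rcons B n.+1))
    & ~~ lexn (enc K.+2 n (rcons B n.+1)) (enc K.+2 n A)].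
Proof.
move=> hA nfA hB nfB nB; case: (eqVneq A [::]) => [->|nA].
  by rewrite enc_nil lex_nil0r ?enc_neq0 // enc_eq_nil0 // (negbTE nB).
set G := enc K.+1 n.+1.
have [[_ sA] [_ sB]] := (NF_blocks nfA hA, NF_blocks nfB hB).
have [bs [bl [eB eB1]]] := @splitw_rcons n B n.+1 (negbT (gtn_eqF (ltnSn n))).
have /andP[lt1 lt2] := lex_enc_rcons_sep K n.+1 bl.
have bG X c : c \in map G X -> is_block c by move=> /mapP [P _ ->]; apply: enc_block.
set w := maxsub lexn (rcons (map G bs) (G (rcons bl n.+1))).
have bw : {in w, forall c, is_block c}.
  move=> c /(mem_subseq (maxsub_subseq _ _)); rewrite mem_rcons inE => /orP[/eqP->|/bG //].
  exact: enc_block.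
have EA : enc K.+2 n A = pack (map G (splitw n A)) by rewrite encS // (maxsub_id lexn_trans).
have EB : enc K.+2 n B = pack (map G (splitw n B)) by rewrite encS // (maxsub_id lexn_trans).
have EB1 : enc K.+2 n (rcons B n.+1) = pack w by rewrite encS ?eB1 ?map_rcons //; case: (B).
have eGB : map G (splitw n B) = rcons (map G bs) (G bl) by rewrite eB map_rcons.
have hsucc : {in map G (splitw n A) ++ map G bs, forall c, lexn (G bl) c ->
    lexn c (G (rcons bl n.+1)) -> c != G (rcons bl n.+1) -> c = G bl}.
  move=> c; rewrite mem_cat => /orP[] /mapP [P hP ->]; apply: enc_rcons_sep_succ.
    exact: in_range_splitw hA hP.
  by apply: in_range_splitw hB _; rewrite eB mem_rcons inE hP orbT.
rewrite -[~~ false]/true andTb -(prefix_map_in (enc_inj_blocks hB nfB hA nfA)) eGB.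
rewrite (prefix_lex_succ (lex_refl _) lexn_anti lexn_trans lexn_total lt1 lt2) -?eGB //.
rewrite EA EB EB1 !lex_pack //; try by move=> c /bG.
rewrite -/G -/w; congr andb; apply: andb_id2l => huw.
by rewrite (lex_neq lexn_anti huw).
Qed.

(** * Definability in the structure on W^N_3 *)

Local Notation code A := (enc 4 0 A).

Lemma W3_in_range A : W3 A = in_range 0 4 A.
Proof. by apply: eq_all => x; rewrite leq0n add0n ltnS. Qed.

Lemma wle_code A B : W3 A -> W3 B -> (wle A B <-> lexn (code A) (code B)).
Proof. by move=> hA hB; apply: wle_enc; rewrite in_range_cat -!W3_in_range hA hB. Qed.

Lemma W3N_ltE a b :
  W3N_lt a b <-> lexn (code (sval a)) (code (sval b)) && ~~ lexn (code (sval b)) (code (sval a)).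
Proof.
case: a => A [wA nfA]; case: b => B [wB nfB].
rewrite /W3N_lt /wlt /= (wle_code wA wB) (wle_code wB wA).
by split=> [[-> /negP]|/andP[-> /negP]].
Qed.

Lemma W3N_nonmin b : (exists a, W3N_lt a b) <-> sval b != [::].
Proof.
split=> [[a /W3N_ltE /andP[_]]|nb].
  by apply: contra => /eqP->; rewrite enc_nil lex_nil0 ?enc_neq0.
exists W3N_nil; apply/W3N_ltE.
by rewrite [sval W3N_nil]/= enc_nil lex_nil0 ?enc_neq0 // lex_nil0r ?enc_neq0 // enc_eq_nil0.
Qed.

Lemma diamond1_code b : code (sval (diamond 1 b)) = code (rcons (sval b) 1).
Proof.
case: b => B [wB nfB] /=.
have wB1 : W3 (rcons B 1) by move: wB; rewrite /W3 all_rcons => ->.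
have [N [hN nfN] eN] : exists2 N, in_range 0 4 N /\ NF N & code N = code (rcons B 1).
  by apply: NF_enc_exists; rewrite -W3_in_range.
have wN : W3 N by rewrite W3_in_range.
have ex : exists d : W3N, weq (sval d) (rcons B 1).
  by exists (exist _ N (conj wN nfN)); rewrite /weq /= !wle_code // eN lex_refl.
have [] := epsilon_spec (inhabits W3N_nil) (fun d : W3N => weq (sval d) (rcons B 1)) ex.
rewrite /diamond; case: (epsilon _ _) => D [wD nfD] /= h1 h2.
by apply: lexn_anti; apply/andP; split; [apply/(wle_code wD wB1)|apply/(wle_code wB1 wD)].
Qed.

Lemma Sl_splitw a b : Sl a b <->
  [/\ sval a != [::], sval b != [::] & prefix (splitw 0 (sval b)) (splitw 0 (sval a))].
Proof.
case: a b => A [wA nfA] [B [wB nfB]]; rewrite /Sl /=; split.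
  case=> nA [nB [Cs [m [hm1 [hm2 [hCs [eA eB]]]]]]].
  have nCs : Cs != [::] by case: (Cs) hm2 => //; rewrite leqn0 => /eqP m0; rewrite m0 in hm1.
  have h0 : {in Cs, forall C, 0 \notin C} by move=> C /(allP hCs) /allP hC; apply/negP => /hC.
  have nt : take m Cs != [::] by case: (Cs) nCs => // c Cs' _; case: (m) hm1.
  split; [exact/eqP|exact/eqP|].
  rewrite eA eB !splitw_joinw // ?prefix_take // => C /mem_take; exact: h0.
case=> nA nB hp; split; first exact/eqP.
split; first exact/eqP.
exists (splitw 0 A), (size (splitw 0 B)); rewrite size_splitw; split=> //.
split; first by rewrite -size_splitw; apply: size_prefix.
split.
  by apply/allP => P hP; apply/allP => x /(mem_splitw hP) /andP[_]; rewrite lt0n.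
by move: hp; rewrite prefixE size_splitw => /eqP ->; rewrite !joinw_splitw.
Qed.

Lemma slice_code A B : W3 A -> NF A -> W3 B -> NF B ->
  [/\ A != [::], B != [::] & prefix (splitw 0 B) (splitw 0 A)] <->
  [/\ B != [::], lexn (code B) (code A) &
      lexn (code A) (code (rcons B 1)) && ~~ lexn (code (rcons B 1)) (code A)].
Proof.
rewrite !W3_in_range => hA nfA hB nfB.
case: (eqVneq B [::]) => [->|nB]; first by split=> [[]|[]].
have := slice_enc hA nfA hB nfB nB; case: (A != [::]) => /=.
  by move=> ->; case: and3P => [[-> -> ->]|h]; split=> [[]|[]]// _ h1 /andP[h2 h3]; case: h.
by move=> /esym /and3P h; split=> [[]|[_ h1 /andP[h2 h3]]] //; case: h.
Qed.

Lemma Sl_order a b :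
  Sl a b <-> (exists c, W3N_lt c b) /\ ~ W3N_lt a b /\ W3N_lt a (diamond 1 b).
Proof.
have notlt x y : ~ (lexn x y && ~~ lexn y x) <-> lexn y x.
  split=> [h|-> /andP[]//]; apply/negPn/negP => h1; apply: h.
  by move: (lexn_total x y); rewrite (negbTE h1) orbF => ->.
rewrite W3N_nonmin !W3N_ltE notlt diamond1_code Sl_splitw.
case: a b => A [wA nfA] [B [wB nfB]] /=; rewrite (slice_code wA nfA wB nfB).
by split=> [[]|[? []]].
Qed.

Definition slice_formula : form :=
  FAnd (FEx 2 (FLt (TVar 2) (TVar 1)))
       (FAnd (FNot (FLt (TVar 0) (TVar 1))) (FLt (TVar 0) (TD1 (TVar 1)))).

Theorem lemma6 : definable2 Sl.
Proof.
by exists slice_formula => e; rewrite Sl_order.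
Qed.
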